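(* Let $c\in\mathcal{C}$ and suppose there exist $0\le\theta_1<\theta_2<2\pi$ with $c(\theta_1)=c(\theta_2)$. Then there exist $\theta,\tilde\theta\in[\theta_1,\theta_2]$ (at which $c'$ exists and is nonzero) such that $|\mathrm{angle}(c'(\theta))-\mathrm{angle}(c'(\tilde\theta))|\ge\pi$, with strict inequality unless $c([\theta_1,\theta_2])$ is a segment.
   Context: The plane is identified with $\mathbb{C}$, and $\mathbb{S}^1$ with $[0,2\pi)$. $\mathcal{C}$ denotes the set of Lipschitz maps $c:\mathbb{S}^1\to\mathbb{C}$ with $c'(\theta)\neq 0$ for a.e. $\theta$. For $z\in\mathbb{C}\setminus\{0\}$, $\mathrm{angle}(z)\in[0,2\pi)$ denotes the argument of $z$. *)

From mathcomp Require Import all_boot all_order all_algebra.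
From mathcomp Require Import all_classical all_reals all_analysis.
Set Implicit Arguments. Unset Strict Implicit. Unset Printing Implicit Defensive.
Import Order.TTheory GRing.Theory Num.Theory.
Local Open Scope ring_scope.
Local Open Scope classical_set_scope.

(* The plane C, identified with R x R (real part, imaginary part). *)
Definition Plane (R : realType) := (R^o * R^o)%type.

(* S^1 is identified with [0, 2pi); a map S^1 -> C is represented by a
   2pi-periodic map R -> C. *)
Definition periodic2pi (R : realType) (c : R -> Plane R) : Prop :=
  forall t : R, c (t + 2 * pi) = c t.

(* The class \mathcal{C}: Lipschitz maps S^1 -> C whose derivative exists
   and is nonzero for a.e. theta in [0, 2pi). *)
Definition in_curve_class (R : realType) (c : R -> Plane R) : Prop :=
  [/\ periodic2pi c,
      (exists k : R, forall s t : R, `|c s - c t| <= k * `|s - t|) &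
      (@lebesgue_measure R).-negligible
        [set t : R | 0 <= t < 2 * pi /\ ~ (derivable c t 1 /\ 'D_1 c t != 0)]].

(* angle z in [0, 2pi): the argument of z = (x, y) <> 0. *)
Definition angle (R : realType) (z : Plane R) : R :=
  let r := Num.sqrt (z.1 ^+ 2 + z.2 ^+ 2) in
  if 0 <= z.2 then acos (z.1 / r) else 2 * pi - acos (z.1 / r).

Definition is_segment (R : realType) (S : set (Plane R)) : Prop :=
  exists a b : Plane R, S = [set a + t *: (b - a) | t in `[0, 1]%classic].

(* If two tangent directions on the arc differ by more than pi there is nothing
   to prove. Otherwise all tangent angles lie in a window [phi - pi/2, phi + pi/2],
   so the projection of c on the direction phi is a Lipschitz function whose
   derivative is nonnegative almost everywhere. Such a function is nondecreasing
   (a Lipschitz image of a null set contains no interval), and since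
   c(th1) = c(th2) it is constant: the arc lies on a line, hence is a segment,
   and every tangent angle is phi + pi/2 or phi - pi/2. Both values occur, for
   otherwise the projection on the common tangent direction would strictly
   increase along the closed arc; so two tangent angles differ by exactly pi. *)

From mathcomp Require Import all_boot all_order all_algebra.
From mathcomp Require Import all_classical all_reals all_analysis.
From mathcomp Require Import measurable_realfun ring lra.
Import Order.TTheory GRing.Theory Num.Theory numFieldNormedType.Exports.
Local Open Scope ring_scope.
Local Open Scope classical_set_scope.

Set Implicit Arguments.
Unset Strict Implicit.
Unset Printing Implicit Defensive.

(** * Lipschitz functions and null sets *)

Section Lipschitz.
Variables (R : realFieldType) (V W : normedModType R) (f : V -> W) (k : R).
Hypothesis f_lip : forall s t, `|f s - f t| <= k * `|s - t|.

Lemma lipschitz_gt0 :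
  exists2 K, 0 < K & forall s t, `|f s - f t| <= K * `|s - t|.
Proof.
exists (`|k| + 1) => [|s t]; first by rewrite ltr_wpDl.
apply: le_trans (f_lip s t) _; rewrite ler_wpM2r // (le_trans (ler_norm k)) //.
by rewrite lerDl.
Qed.

Lemma lipschitz_continuous : continuous f.
Proof.
have [K K0 f_lipK] := lipschitz_gt0.
move=> x; apply/cvgrPdist_lt => e e0; apply/nbhs_ballP.
exists (e / K) => [|y]; first by rewrite /= divr_gt0.
rewrite -ball_normE /= ltr_pdivlMr // => xy.
by apply: le_lt_trans (f_lipK x y) _; rewrite mulrC.
Qed.

End Lipschitz.

Lemma negligible_itv_cover (R : realType) (N : set R) (e : R) :
  (@lebesgue_measure R).-negligible N -> 0 < e ->
  exists a b : nat -> R, [/\ forall k, a k <= b k,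
    N `<=` \bigcup_k `]a k, b k[ &
    (\sum_(0 <= k <oo) (b k - a k)%:E < e%:E)%E].
Proof.
move=> /negligible_outer_measure N0 e0.
have : (ereal_inf [set \sum_(0 <= k <oo) wlength idfun (F k)
    | F in open_itv_cover N] < e%:E)%E.
  by rewrite -outer_measure_open_itv_cover N0 lte_fin.
move=> /ereal_inf_lt[_ [F [F_itv NF] <-]] Fe.
pose a k := (sval (cid (F_itv k))).1.
(* Capping b below by a keeps ]a, b[ and makes its length nonnegative. *)
pose b k := Num.max (a k) (sval (cid (F_itv k))).2.
have Fk k : F k = `]a k, b k[.
  rewrite (svalP (cid (F_itv k))) /b; apply/seteqP; split => x /=; rewrite !in_itv /=.
    by move=> /andP[-> xb]; rewrite lt_max xb orbT.
  by rewrite lt_max => /andP[ax /orP[/(lt_trans ax)|->]]; rewrite ?ltxx ?ax.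
exists a, b; split => [k | x /NF[k _] | ]; first by rewrite le_max lexx.
  by rewrite Fk; exists k.
apply: le_lt_trans Fe; apply: lee_nneseries => k _.
  by rewrite lee_fin subr_ge0 le_max lexx.
by rewrite Fk wlength_itv_bnd // le_max lexx.
Qed.

Lemma lipschitz_image_negligible_no_itv (R : realType) (f : R -> R) (k : R)
    (N : set R) (p q : R) :
  (forall s t, `|f s - f t| <= k * `|s - t|) ->
  (@lebesgue_measure R).-negligible N -> p < q -> ~ (`]p, q[ `<=` f @` N).
Proof.
move=> f_lip N0 pq pqN.
have [K K0 f_lipK] := lipschitz_gt0 f_lip.
(* The images of the covering intervals then have total length at most
   2 K (q - p) / (4 K) < q - p. *)
have e0 : 0 < (q - p) / (4 * K) by rewrite divr_gt0 ?mulr_gt0 // subr_gt0.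
have [a [b [ab Nab sum_ab]]] := negligible_itv_cover N0 e0.
pose J n := `[f (a n) - K * (b n - a n), f (a n) + K * (b n - a n)]%classic.
have J_cover : `]p, q[ `<=` \bigcup_n J n.
  move=> y /pqN[x /Nab[n _]]; rewrite /= in_itv /= => /andP[ax xb] <-.
  exists n => //; rewrite /J /= in_itv /=.
  have : `|f x - f (a n)| <= K * (b n - a n).
    apply: le_trans (f_lipK _ _) _; rewrite ler_wpM2l ?ltW // ger0_norm; lra.
  by rewrite ler_norml => /andP[lo hi]; apply/andP; split; lra.
have J_measure n : lebesgue_measure (J n) = ((2 * K) * (b n - a n))%:E.
  rewrite lebesgue_measure_itv /= lte_fin; case: ifPn => [_|].
    by rewrite -EFinD; congr (_%:E); ring.
  rewrite -leNgt => h; have /eqP : b n - a n == 0.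
    by rewrite eq_le subr_ge0 ab andbT -(pmulr_rle0 _ K0); lra.
  by move=> ->; rewrite mulr0.
have : ((q - p)%:E <= \sum_(0 <= n <oo) lebesgue_measure (J n))%E.
  rewrite -[X in (X <= _)%E](_ : lebesgue_measure `]p, q[%classic = _); last first.
    by rewrite lebesgue_measure_itv /= lte_fin pq -EFinD.
  apply: (@measure_sigma_subadditive _ _ (measurableTypeR R) lebesgue_measure) => //.
  by move=> n; exact: measurable_itv.
under eq_eseriesr do rewrite J_measure EFinM.
rewrite nneseriesZl => [|n _]; last by rewrite lee_fin subr_ge0.
have K2 : (0 <= (2 * K)%:E)%E by rewrite lee_fin mulr_ge0 ?ltW.
move=> /le_trans/(_ (lee_wpmul2l K2 (ltW sum_ab))).
rewrite -EFinM lee_fin.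
have -> : 2 * K * ((q - p) / (4 * K)) = (q - p) / 2 by field; rewrite gt_eqF.
lra.
Qed.

Lemma exists_itv_notin_negligible (R : realType) (N : set R) (a b : R) :
  (@lebesgue_measure R).-negligible N -> a < b -> exists t, a < t < b /\ ~ N t.
Proof.
move=> N0 ab; apply/not_existsP => abN.
have id_lip (s t : R) : `|id s - id t| <= 1 * `|s - t| by rewrite mul1r.
apply: (lipschitz_image_negligible_no_itv id_lip N0 ab) => t.
rewrite /= in_itv /= => tab; exists t => //.
by apply: contrapT => Nt; apply: (abN t).
Qed.

(** * Monotonicity from the sign of an a.e. derivative *)

Lemma derive_gt0_right (R : realType) (f : R -> R) (t : R) :
  derivable f t 1 -> 0 < 'D_1 f t ->
  forall e, 0 < e -> exists2 h, 0 < h < e & f t < f (t + h).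
Proof.
move=> df Df_gt0 e e0.
have /cvgr_gt/(_ _ Df_gt0) :
    (fun h : R => h^-1 *: ((f \o shift t) (h *: (1 : R)) - f t)) @ 0^' --> 'D_1 f t.
  exact: df.
rewrite near_withinE => /nbhs_ballP[d /= d0 Hd].
pose h := Num.min d e / 2.
have h0 : 0 < h by rewrite divr_gt0 // lt_min d0 e0.
have [hd he] : h < d /\ h < e.
  have : Num.min d e <= d by rewrite ge_min lexx.
  have : Num.min d e <= e by rewrite ge_min lexx orbT.
  rewrite /h; lra.
exists h; first by rewrite h0 he.
have := Hd h; rewrite /ball /= sub0r normrN gtr0_norm // => /(_ hd (lt0r_neq0 h0)).
by rewrite /= /GRing.scale /= mulr1 (addrC h) pmulr_rgt0 ?invr_gt0 // subr_gt0.
Qed.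

Lemma last_crossing (R : realType) (f : R -> R) (x y v : R) :
  continuous f -> x < y -> f y < v -> v <= f x ->
  exists s, [/\ x <= s < y, f s = v & forall t, s < t <= y -> f t < v].
Proof.
move=> f_cont xy fyv vfx.
pose S := [set t | x <= t <= y /\ v <= f t].
have Sx : S x by split => //; rewrite lexx ltW.
have hS : has_sup S by split; [exists x | exists y => t [/andP[]]].
pose s := sup S.
have [xs sy] : x <= s /\ s <= y.
  split; first exact: (ub_le_sup hS.2 Sx).
  by apply: ge_sup; [exists x | move=> t [/andP[]]].
have after t : s < t <= y -> f t < v.
  move=> /andP[st ty]; rewrite ltNge; apply/negP => vft.
  have tS : S t by split => //; rewrite ty (le_trans xs (ltW st)).
  by have := ub_le_sup hS.2 tS; rewrite -/s; lra.
have vfs : v <= f s.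
  rewrite leNgt; apply/negP => fsv.
  have /(cvgr_lt _)/(_ _ fsv)/nbhs_ballP[d /= d0 Hd] := f_cont s.
  have [t [txy vft]] := sup_adherent d0 hS; rewrite -/s => st.
  have ts : t <= s := ub_le_sup hS.2 (conj txy vft).
  have := Hd t; rewrite -ball_normE /= ger0_norm ?subr_ge0 // => /(_ ltac:(lra)).
  lra.
have sy' : s < y.
  by rewrite lt_neqAle sy andbT; apply: contraTneq fyv => <-; rewrite -leNgt.
exists s; split => //; first by rewrite xs.
apply/eqP; rewrite eq_le vfs andbT leNgt; apply/negP => vfs'.
have /(cvgr_gt _)/(_ _ vfs')/nbhs_ballP[d /= d0 Hd] := f_cont s.
pose t := s + Num.min (y - s) d / 2.
have [st ty td] : [/\ s < t, t <= y & t - s < d].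
  have : Num.min (y - s) d <= y - s by rewrite ge_min lexx.
  have : Num.min (y - s) d <= d by rewrite ge_min lexx orbT.
  have : 0 < Num.min (y - s) d by rewrite lt_min subr_gt0 sy' d0.
  rewrite /t; split; lra.
have := Hd t; rewrite -ball_normE /= distrC ger0_norm ?subr_ge0 ?ltW // => /(_ td).
by have := after t; rewrite st ty => /(_ isT); lra.
Qed.

Lemma lipschitz_derive_gt0_le (R : realType) (f : R -> R) (k : R) (N : set R)
    (a b : R) :
  (forall s t, `|f s - f t| <= k * `|s - t|) ->
  (@lebesgue_measure R).-negligible N ->
  (forall t, a < t < b -> ~ N t -> derivable f t 1 /\ 0 < 'D_1 f t) ->
  forall x y, a <= x -> x <= y -> y <= b -> f x <= f y.
Proof.
move=> f_lip N0 f' x y ax; rewrite le_eqVlt => /orP[/eqP-> //|xy] yb.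
(* Otherwise every v between f y and f x is taken at its last crossing s in
   [x, y], which lies in N: at a regular point, f' s > 0 would push f above v
   just after s. *)
rewrite leNgt; apply/negP => fyx.
apply: (lipschitz_image_negligible_no_itv f_lip N0 fyx) => v.
rewrite /= in_itv /= => /andP[fyv vfx].
have [s [/andP[xs sy] fsv after]] :=
  last_crossing (lipschitz_continuous f_lip) xy fyv (ltW vfx).
exists s => //; apply: contrapT => Ns.
have xs' : x < s.
  by rewrite lt_neqAle xs andbT; apply: contraTneq vfx => ->; rewrite fsv ltxx.
have [f's f's_gt0] := f' s ltac:(apply/andP; split; lra) Ns.
have ys : 0 < y - s by rewrite subr_gt0.
have [h /andP[h0 hys] fsh] := derive_gt0_right f's f's_gt0 ys.
by have := after (s + h) ltac:(apply/andP; split; lra); lra.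
Qed.

Lemma lipschitz_derive_ge0_le (R : realType) (f : R -> R) (k : R) (N : set R)
    (a b : R) :
  (forall s t, `|f s - f t| <= k * `|s - t|) ->
  (@lebesgue_measure R).-negligible N ->
  (forall t, a < t < b -> ~ N t -> derivable f t 1 /\ 0 <= 'D_1 f t) ->
  forall x y, a <= x -> x <= y -> y <= b -> f x <= f y.
Proof.
move=> f_lip N0 f' x y ax; rewrite le_eqVlt => /orP[/eqP-> //|xy] yb.
apply/ler_addgt0Pr => e e0.
pose d := e / (y - x).
have d0 : 0 < d by rewrite divr_gt0 // subr_gt0.
pose g z := f z + d * z.
have g_lip s t : `|g s - g t| <= (k + d) * `|s - t|.
  have -> : g s - g t = (f s - f t) + d * (s - t) by rewrite /g /=; ring.
  rewrite mulrDl; apply: le_trans (ler_normD _ _) _.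
  by rewrite normrM (gtr0_norm d0) lerD2r f_lip.
have g' t : a < t < b -> ~ N t -> derivable g t 1 /\ 0 < 'D_1 g t.
  move=> tab Nt; have [f't f't_ge0] := f' t tab Nt.
  have g't : is_derive t 1 g ('D_1 f t + d *: 1).
    have -> : g = f + d \*: id by apply/funext.
    exact: is_deriveD (derivableP f't) (is_deriveZ d (is_derive_id t 1)).
  split; first exact: ex_derive.
  by rewrite derive_val -[d *: 1]/(d * 1) mulr1 ltr_wpDl.
have := lipschitz_derive_gt0_le g_lip N0 g' ax (ltW xy) yb.
have -> : e = d * (y - x) by rewrite /d divfK // subr_eq0 gt_eqF.
by rewrite /g; lra.
Qed.

Lemma lipschitz_derive_ge0_const (R : realType) (f : R -> R) (k : R)
    (N : set R) (a b : R) :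
  (forall s t, `|f s - f t| <= k * `|s - t|) ->
  (@lebesgue_measure R).-negligible N ->
  (forall t, a < t < b -> ~ N t -> derivable f t 1 /\ 0 <= 'D_1 f t) ->
  f a = f b -> forall x, a <= x <= b -> f x = f a.
Proof.
move=> f_lip N0 f' fab x /andP[ax xb].
have f_le := lipschitz_derive_ge0_le f_lip N0 f'.
have ab := le_trans ax xb.
by apply/eqP; rewrite eq_le (f_le a x) // andbT fab f_le.
Qed.

Lemma derive_itv_const (R : realType) (f : R -> R) (a b c t : R) :
  (forall x, a < x < b -> f x = c) -> a < t < b -> 'D_1 f t = 0.
Proof.
move=> fc tab; have tab' : t \in `]a, b[%R by rewrite in_itv.
rewrite (@near_eq_derive _ _ _ _ (cst c)) ?derive_cst //.
near=> x; have : x \in `]a, b[%R by near: x; exact: near_in_itvoo tab'.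
by rewrite in_itv => /fc.
Unshelve. all: by end_near. Qed.

(** * Polar angle and directional projections *)

Definition euclid_norm (R : realType) (z : Plane R) : R :=
  Num.sqrt (z.1 ^+ 2 + z.2 ^+ 2).

Lemma polar_angle (R : realType) (z : Plane R) : z != 0 ->
  [/\ 0 < euclid_norm z, z.1 = euclid_norm z * cos (angle z),
      z.2 = euclid_norm z * sin (angle z) & 0 <= angle z < 2 * pi].
Proof.
case: z => x y /= nz.
have s0 : 0 < x ^+ 2 + y ^+ 2.
  rewrite lt_neqAle addr_ge0 ?sqr_ge0 // andbT eq_sym paddr_eq0 ?sqr_ge0 //.
  by rewrite !expf_eq0 /=; apply: contra nz => /andP[/eqP-> /eqP->].
rewrite /angle /euclid_norm /=; set r := Num.sqrt _.
have r0 : 0 < r by rewrite sqrtr_gt0.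
have r2 : r ^+ 2 = x ^+ 2 + y ^+ 2 by rewrite sqr_sqrtr // ltW.
have xr : -1 <= x / r <= 1.
  have : (x / r) ^+ 2 <= 1 by rewrite expr_div_n r2 ler_pdivrMr // mul1r lerDl sqr_ge0.
  by move=> h; apply/andP; split; nra.
have [/andP[acos_ge0 acos_le_pi] cos_acos] := acos_def xr.
have sin_acos : sin (acos (x / r)) = `|y| / r.
  rewrite sin_acos //.
  have -> : 1 - (x / r) ^+ 2 = (`|y| / r) ^+ 2.
    rewrite !expr_div_n real_normK ?num_real // r2.
    by field; rewrite gt_eqF.
  by rewrite sqrtr_sqr ger0_norm // divr_ge0 // ltW.
have pi0 := pi_gt0 R.
case: ifPn => y0.
  rewrite cos_acos sin_acos ger0_norm //.
  split => //; try by field; rewrite gt_eqF.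
  by rewrite acos_ge0 /=; lra.
have yn : y < 0 by rewrite ltNge.
have h2pi : (2 : R) * pi = pi *+ 2 by rewrite mulr2n; lra.
rewrite cosB sinB h2pi cos2pi sin2pi cos_acos sin_acos ltr0_norm //.
split => //; try by field; rewrite gt_eqF.
have : 0 < acos (x / r).
  rewrite lt_neqAle acos_ge0 andbT; apply/eqP => acos0.
  have : 0 < `|y| / r by rewrite divr_gt0 // normr_gt0 ltr0_neq0.
  by rewrite -sin_acos -acos0 sin0 ltxx.
by rewrite -h2pi; lra.
Qed.

Definition proj_dir (R : realType) (phi : R) (z : Plane R) : R :=
  cos phi * z.1 + sin phi * z.2.

Section ProjDir.
Variable R : realType.
Implicit Types (phi : R) (p q : Plane R).

Lemma proj_dir_polar phi p : p != 0 ->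
  proj_dir phi p = euclid_norm p * cos (angle p - phi).
Proof.
by case/polar_angle => _ p1 p2 _; rewrite /proj_dir {1}p1 {1}p2 cosB; ring.
Qed.

Lemma proj_dirB phi p q : proj_dir phi (p - q) = proj_dir phi p - proj_dir phi q.
Proof. by rewrite /proj_dir /=; ring. Qed.

Lemma proj_dirZ phi l p : proj_dir phi (l *: p) = l * proj_dir phi p.
Proof. by rewrite /proj_dir /= /GRing.scale /=; ring. Qed.

Lemma proj_dir_line phi p q l :
  proj_dir phi (p + l *: (q - p)) =
  proj_dir phi p + l * (proj_dir phi q - proj_dir phi p).
Proof. by rewrite /proj_dir /= /GRing.scale /=; ring. Qed.

Lemma norm_proj_dir_le phi p : `|proj_dir phi p| <= 2 * `|p|.
Proof.
apply: le_trans (ler_normD _ _) _; rewrite mulr2n mulrDl mul1r !normrM.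
have [c1 s1] : `|cos phi| <= 1 /\ `|sin phi| <= 1.
  by split; [exact: cos_max | exact: sin_max].
have [p1 p2] : `|p.1| <= `|p| /\ `|p.2| <= `|p|.
  by rewrite prod_normE; split; rewrite le_max lexx ?orbT.
by apply: lerD; rewrite -[leRHS]mul1r ler_pM.
Qed.

Lemma proj_dir_continuous phi : continuous (proj_dir phi).
Proof.
by apply: (@lipschitz_continuous _ _ _ _ 2) => p q; rewrite -proj_dirB norm_proj_dir_le.
Qed.

Lemma proj_dir_inj phi p q : proj_dir phi p = proj_dir phi q ->
  proj_dir (phi + pi / 2) p = proj_dir (phi + pi / 2) q -> p = q.
Proof.
move: p q => [p1 p2] [q1 q2]; rewrite /proj_dir /= cosDpihalf sinDpihalf => e1 e2.
have one := cos2Dsin2 phi.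
congr (_, _); rewrite -[LHS]mul1r -[RHS]mul1r -one.
- have -> : (cos phi ^+ 2 + sin phi ^+ 2) * p1 = cos phi * (cos phi * p1 + sin phi * p2)
      - sin phi * (- sin phi * p1 + cos phi * p2) by ring.
  by rewrite e1 e2; ring.
- have -> : (cos phi ^+ 2 + sin phi ^+ 2) * p2 = sin phi * (cos phi * p1 + sin phi * p2)
      + cos phi * (- sin phi * p1 + cos phi * p2) by ring.
  by rewrite e1 e2; ring.
Qed.

Lemma proj_dir_lipschitz (c : R -> Plane R) k phi :
  (forall s t, `|c s - c t| <= k * `|s - t|) ->
  forall s t, `|proj_dir phi (c s) - proj_dir phi (c t)| <= 2 * k * `|s - t|.
Proof.
move=> c_lip s t; rewrite -proj_dirB -mulrA.
by apply: le_trans (norm_proj_dir_le _ _) _; rewrite ler_wpM2l.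
Qed.

Lemma is_derive_proj_dir (c : R -> Plane R) t phi : derivable c t 1 ->
  is_derive t 1 (proj_dir phi \o c) (proj_dir phi ('D_1 c t)).
Proof.
move=> c't.
have quot_cvg : h^-1 *: ((c \o shift t) (h *: (1 : R)) - c t) @[h --> 0^']
    --> 'D_1 c t by exact: c't.
move: (cvg_comp _ _ quot_cvg (@proj_dir_continuous phi ('D_1 c t))).
have -> : proj_dir phi \o (fun h => h^-1 *: ((c \o shift t) (h *: (1 : R)) - c t)) =
    (fun h => h^-1 *:
       ((proj_dir phi \o c \o shift t) (h *: (1 : R)) - proj_dir phi (c t))).
  by apply/funext => h; rewrite /= proj_dirZ proj_dirB.
by move=> proj_cvg; apply: DeriveDef; [exact: cvgP proj_cvg | exact: cvg_lim proj_cvg].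
Qed.

End ProjDir.

Lemma IVT_between (R : realType) (g : R -> R) (u w v : R) : continuous g ->
  Num.min (g u) (g w) <= v <= Num.max (g u) (g w) ->
  exists2 x, Num.min u w <= x <= Num.max u w & g x = v.
Proof.
move=> g_cont.
have g_within p q : {within `[p, q], continuous g}.
  by apply: continuous_subspaceT => x; exact: g_cont.
case: (leP u w) => [uw|/ltW wu] v_between.
  by have [x] := IVT uw (g_within u w) v_between; rewrite in_itv /=; exists x.
rewrite minC maxC in v_between.
by have [x] := IVT wu (g_within w u) v_between; rewrite in_itv /=; exists x.
Qed.

Lemma proj_dir_const_is_segment (R : realType) (c : R -> Plane R) (phi a b : R) :
  continuous c -> a <= b ->
  (forall x, a <= x <= b -> proj_dir phi (c x) = proj_dir phi (c a)) ->
  is_segment (c @` `[a, b]).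
Proof.
move=> c_cont ab c_on_line.
pose g x := proj_dir (phi + pi / 2) (c x).
have g_cont : continuous g.
  by move=> x; apply: continuous_comp (c_cont x) _; exact: proj_dir_continuous.
have g_within : {within `[a, b], continuous g}.
  by apply: continuous_subspaceT => x; exact: g_cont.
have [s1 s1ab g_min] := EVT_min ab g_within.
have [s2 s2ab g_max] := EVT_max ab g_within.
move: s1ab s2ab; rewrite !in_itv /= => s1ab s2ab.
have g12 : g s1 <= g s2 by apply: g_min; rewrite in_itv.
have on_segment x l : a <= x <= b -> g x = g s1 + l * (g s2 - g s1) ->
    c s1 + l *: (c s2 - c s1) = c x.
  move=> xab gx; apply: (@proj_dir_inj _ phi); rewrite proj_dir_line.
    by rewrite !c_on_line // subrr mulr0 addr0.
  exact: esym gx.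
exists (c s1), (c s2); apply/seteqP; split => [_ [x xab <-] | _ [l l01 <-]].
  move: xab; rewrite /= in_itv /= => xab.
  have [gs1x gxs2] : g s1 <= g x /\ g x <= g s2.
    by split; [apply: g_min | apply: g_max]; rewrite in_itv.
  have [g_eq|g_lt] := eqVneq (g s1) (g s2).
    exists 0; first by rewrite /= in_itv /= lexx ler01.
    apply: on_segment => //; rewrite mul0r addr0.
    by apply/eqP; rewrite eq_le gs1x g_eq gxs2.
  have g_gt0 : 0 < g s2 - g s1 by rewrite subr_gt0 lt_neqAle g_lt g12.
  exists ((g x - g s1) / (g s2 - g s1)).
    rewrite /= in_itv /= divr_ge0 ?subr_ge0 ?(ltW g_gt0) //=.
    by rewrite ler_pdivrMr // mul1r lerD2r.
  by apply: on_segment => //; field; rewrite gt_eqF.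
move: l01; rewrite /= in_itv /= => /andP[l0 l1].
have [x xs12 gx] : exists2 x, Num.min s1 s2 <= x <= Num.max s1 s2 &
    g x = g s1 + l * (g s2 - g s1).
  apply: IVT_between => //; rewrite (min_l g12) (max_r g12).
  by apply/andP; split; nra.
have xab : a <= x <= b.
  move: xs12; rewrite ge_min le_max; case/andP: s1ab; case/andP: s2ab.
  by move=> *; apply/andP; split; lra.
by exists x; [rewrite /= in_itv | apply/esym/on_segment].
Qed.

(** * Closed arcs *)

Definition tangent_angle (R : realType) (c : R -> Plane R) (t : R) : R :=
  angle ('D_1 c t).

Section ClosedArc.
Variables (R : realType) (c : R -> Plane R) (k : R) (N : set R) (a b : R).
Hypotheses (c_lip : forall s t, `|c s - c t| <= k * `|s - t|)
  (N0 : (@lebesgue_measure R).-negligible N) (ab : a < b) (c_ab : c a = c b)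
  (c' : forall t, a < t < b -> ~ N t -> derivable c t 1 /\ 'D_1 c t != 0).

Let regular t := a < t < b /\ ~ N t.

Lemma arc_proj_dir_const phi :
  (forall t, regular t -> 0 <= proj_dir phi ('D_1 c t)) ->
  forall x, a <= x <= b -> proj_dir phi (c x) = proj_dir phi (c a).
Proof.
move=> c'_phi; apply: (lipschitz_derive_ge0_const (proj_dir_lipschitz phi c_lip) N0).
- move=> t tab Nt; have c't := is_derive_proj_dir phi (c' tab Nt).1.
  by split; [exact: ex_derive | rewrite derive_val; exact: c'_phi].
- by rewrite /= c_ab.
Qed.

Lemma arc_proj_dir_derive_eq0 phi :
  (forall t, regular t -> 0 <= proj_dir phi ('D_1 c t)) ->
  forall t, regular t -> proj_dir phi ('D_1 c t) = 0.
Proof.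
move=> c'_phi t [tab Nt].
have c't := is_derive_proj_dir phi (c' tab Nt).1.
rewrite -[LHS]derive_val.
apply: (derive_itv_const (a := a) (b := b) (c := proj_dir phi (c a))) => //.
move=> x /andP[ax xb].
by apply: arc_proj_dir_const => //; rewrite !ltW.
Qed.

Lemma arc_no_strict_direction phi :
  ~ (forall t, regular t -> 0 < proj_dir phi ('D_1 c t)).
Proof.
move=> c'_phi; have [t0 t0_reg] := exists_itv_notin_negligible N0 ab.
have := arc_proj_dir_derive_eq0 (fun t rt => ltW (c'_phi t rt)) t0_reg.
by apply/eqP; rewrite gt_eqF // c'_phi.
Qed.

Lemma arc_angle_window :
  (forall t t', regular t -> regular t' ->
     `|tangent_angle c t - tangent_angle c t'| <= pi) ->
  exists phi, forall t, regular t -> - (pi / 2) <= tangent_angle c t - phi <= pi / 2.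
Proof.
move=> spread; have [t0 t0_reg] := exists_itv_notin_negligible N0 ab.
pose A := tangent_angle c @` regular.
have hA : has_sup A.
  split; first by exists (tangent_angle c t0), t0.
  exists (2 * pi) => _ [t [tab Nt] <-].
  by have [_ _ _ /andP[_ /ltW]] := polar_angle (c' tab Nt).2.
exists (sup A - pi / 2) => t rt.
have le_sup : tangent_angle c t <= sup A by apply: (ub_le_sup hA.2); exists t.
have sup_le : sup A <= tangent_angle c t + pi.
  apply: ge_sup; first exact: hA.1.
  move=> _ [t' rt' <-]; have := spread t' t rt' rt.
  by move=> /(le_trans (ler_norm _)); rewrite lerBlDr addrC.
by apply/andP; split; lra.
Qed.

Section Window.
Variable phi : R.
Hypothesis window :
  forall t, regular t -> - (pi / 2) <= tangent_angle c t - phi <= pi / 2.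

Lemma arc_window_proj_dir_ge0 t : regular t -> 0 <= proj_dir phi ('D_1 c t).
Proof.
move=> [tab Nt]; have c't_neq0 := (c' tab Nt).2.
rewrite proj_dir_polar // mulr_ge0 ?cos_ge0_pihalf ?window //.
by case: (polar_angle c't_neq0) => /ltW.
Qed.

Lemma arc_window_tangents t : regular t ->
  tangent_angle c t = phi + pi / 2 \/ tangent_angle c t = phi - pi / 2.
Proof.
move=> rt; have [tab Nt] := rt; have c't_neq0 := (c' tab Nt).2.
have [r_gt0 _ _ _] := polar_angle c't_neq0.
have := arc_proj_dir_derive_eq0 arc_window_proj_dir_ge0 rt.
rewrite proj_dir_polar // => /eqP; rewrite mulf_eq0 gt_eqF //=.
rewrite -/(tangent_angle c t) => /eqP cos0; have /andP[lo hi] := window rt.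
move: lo hi; rewrite !le_eqVlt => /orP[/eqP lo|lo] /orP[/eqP hi|hi].
- by right; lra.
- by right; lra.
- by left; lra.
have : 0 < cos (tangent_angle c t - phi) by apply: cos_gt0_pihalf; rewrite lo hi.
by rewrite cos0 ltxx.
Qed.

Lemma arc_window_opposite_tangents : exists t t',
  [/\ regular t, regular t' & `|tangent_angle c t - tangent_angle c t'| = pi].
Proof.
apply: contrapT => no_pair.
have opposite t t' : regular t -> regular t' ->
    tangent_angle c t = phi + pi / 2 -> tangent_angle c t' = phi - pi / 2 -> False.
  move=> rt rt' et et'; apply: no_pair; exists t, t'; split => //.
  have -> : tangent_angle c t - tangent_angle c t' = pi by rewrite et et'; field.
  by rewrite ger0_norm // pi_ge0.
have [t0 t0_reg] := exists_itv_notin_negligible N0 ab.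
have same t : regular t -> tangent_angle c t = tangent_angle c t0.
  move=> rt; case: (arc_window_tangents rt) => et;
    case: (arc_window_tangents t0_reg) => e0.
  - by rewrite et e0.
  - by case: (opposite _ _ rt t0_reg et e0).
  - by case: (opposite _ _ t0_reg rt e0 et).
  - by rewrite et e0.
apply: (@arc_no_strict_direction (tangent_angle c t0)) => t rt; have [tab Nt] := rt.
have [r_gt0 _ _ _] := polar_angle (c' tab Nt).2.
rewrite proj_dir_polar ?(c' tab Nt).2 // -/(tangent_angle c t) same //.
by rewrite subrr cos0 mulr1.
Qed.

End Window.

Lemma arc_tangent_spread : exists t t', [/\ regular t, regular t',
  pi <= `|tangent_angle c t - tangent_angle c t'| &
  (~ is_segment (c @` `[a, b]) -> pi < `|tangent_angle c t - tangent_angle c t'|)].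
Proof.
have [[t [t' [rt rt' gap]]] | no_gap] := pselect (exists t t',
    [/\ regular t, regular t' & pi < `|tangent_angle c t - tangent_angle c t'|]).
  by exists t, t'; split => //; exact: ltW.
have [phi window] : exists phi, forall t, regular t ->
    - (pi / 2) <= tangent_angle c t - phi <= pi / 2.
  apply: arc_angle_window => t t' rt rt'; rewrite leNgt; apply/negP => gap.
  by apply: no_gap; exists t, t'.
have seg : is_segment (c @` `[a, b]).
  apply: (proj_dir_const_is_segment (lipschitz_continuous c_lip) (ltW ab)).
  exact: arc_proj_dir_const (arc_window_proj_dir_ge0 window).
have [t [t' [rt rt' gap]]] := arc_window_opposite_tangents window.
by exists t, t'; split => //; rewrite gap.
Qed.

End ClosedArc.

Theorem lemma3p1 (R : realType) (c : R -> Plane R) (th1 th2 : R) :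
  in_curve_class c ->
  0 <= th1 -> th1 < th2 -> th2 < 2 * pi ->
  c th1 = c th2 ->
  exists th th' : R,
    [/\ th \in `[th1, th2] /\ th' \in `[th1, th2],
        derivable c th 1 /\ 'D_1 c th != 0,
        derivable c th' 1 /\ 'D_1 c th' != 0,
        pi <= `|angle ('D_1 c th) - angle ('D_1 c th')| &
        (~ is_segment (c @` `[th1, th2]) ->
           pi < `|angle ('D_1 c th) - angle ('D_1 c th')|)].
Proof.
move=> [_ [k c_lip] N0] th1_ge0 th12 th2_lt c12.
have c' t : th1 < t < th2 ->
    ~ [set t | 0 <= t < 2 * pi /\ ~ (derivable c t 1 /\ 'D_1 c t != 0)] t ->
    derivable c t 1 /\ 'D_1 c t != 0.
  move=> /andP[t1 t2] Nt; apply: contrapT => bad; apply: Nt; split => //.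
  by rewrite (le_trans th1_ge0 (ltW t1)) (lt_trans t2 th2_lt).
have [t [t' [[tI Nt] [t'I Nt'] gap strict_gap]]] :=
  @arc_tangent_spread R c k _ th1 th2 c_lip N0 th12 c12 c'.
have in_th12 s : th1 < s < th2 -> s \in `[th1, th2].
  by move=> /andP[s1 s2]; apply/mem_set; rewrite /= in_itv /= !ltW.
exists t, t'; split; [split; exact: in_th12 | exact: c' tI Nt | exact: c' t'I Nt' | |].
- exact: gap.
- exact: strict_gap.
Qed.
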